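(* For positive integers $j,k,m,n$ (with all complete graphs and paths below of order at least $2$ and all cycles of length at least $3$), the following hold: 1. $C_{cc}(K_m\boxtimes K_n)=C_{cc}(K_m\circ K_n)=1$. 2. $C_{cc}(K_m\boxtimes C_n)=C_{cc}(K_m\circ C_n)=\lfloor n/2\rfloor$. 3. $C_{cc}(K_m\boxtimes P_n)=C_{cc}(K_m\circ P_n)=\lceil n/2\rceil$. 4. $C_{cc}(C_m\circ C_n)=\lfloor m/2\rfloor\lfloor n/2\rfloor$. 5. $C_{cc}(C_{2j}\boxtimes C_n)=j\lfloor n/2\rfloor$. 6. $C_{cc}(C_{2j+1}\boxtimes C_{2k+1})=jk+\lfloor k/2\rfloor$, when $j\geq k$. 7. $C_{cc}(C_m\boxtimes P_n)=C_{cc}(C_m\circ P_n)=\lfloor m/2\rfloor\lceil n/2\rceil$. 8. $C_{cc}(P_m\boxtimes P_n)=C_{cc}(P_m\circ P_n)=\lceil m/2\rceil\lceil n/2\rceil$.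
   Context: All graphs are finite, simple and undirected. $K_\ell$, $C_\ell$, $P_\ell$ denote the complete graph, cycle and path on $\ell$ vertices. For a graph $G$ and $S\subseteq V(G)$, the cycle interval $\langle S\rangle$ consists of the vertices of $S$ together with every vertex $w\in V(G)\setminus S$ such that $G[S\cup\{w\}]$ contains a cycle through $w$; $S$ is cycle convex if $\langle S\rangle=S$. The cycle convexity number $C_{cc}(G)$ is the maximum cardinality of a proper (i.e. $\neq V(G)$) cycle convex subset of $V(G)$. The strong product $G\boxtimes H$ has vertex set $V(G)\times V(H)$ with $(g_1,h_1)\sim(g_2,h_2)$ iff ($g_1\sim g_2$, $h_1=h_2$) or ($g_1=g_2$, $h_1\sim h_2$) or ($g_1\sim g_2$, $h_1\sim h_2$). The lexicographic product $G\circ H$ has vertex set $V(G)\times V(H)$ with $(g_1,h_1)\sim(g_2,h_2)$ iff $g_1\sim g_2$, or ($g_1=g_2$ and $h_1\sim h_2$). *)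

From mathcomp Require Import all_boot.
Set Implicit Arguments. Unset Strict Implicit. Unset Printing Implicit Defensive.

(* A simple graph on a finite type T is given by its adjacency relation e
   (symmetric, irreflexive for the graphs used below). *)

Definition Kg (n : nat) : rel 'I_n := fun x y => x != y.
Definition Pg (n : nat) : rel 'I_n :=
  fun x y => (x.+1 == y :> nat) || (y.+1 == x :> nat).
Definition Cg (n : nat) : rel 'I_n :=
  fun x y => (x != y) && ((x.+1 %% n == y :> nat) || (y.+1 %% n == x :> nat)).

Definition strongP (T1 T2 : finType) (e1 : rel T1) (e2 : rel T2) : rel (T1 * T2) :=
  fun x y => [|| e1 x.1 y.1 && (x.2 == y.2),
                 (x.1 == y.1) && e2 x.2 y.2
               | e1 x.1 y.1 && e2 x.2 y.2].
Definition lexP (T1 T2 : finType) (e1 : rel T1) (e2 : rel T2) : rel (T1 * T2) :=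
  fun x y => e1 x.1 y.1 || ((x.1 == y.1) && e2 x.2 y.2).

(* The induced subgraph G[A] contains a cycle through w: a sequence of
   pairwise distinct vertices of A, of length >= 3, containing w, consecutive
   (cyclically) adjacent.  Such a sequence has length <= #|T|. *)
Definition cycle_through (T : finType) (e : rel T) (A : {set T}) (w : T) : bool :=
  [exists n : 'I_#|T|.+1, [exists t : n.-tuple T,
     [&& w \in (t : seq T), uniq t, 2 < n, all (fun v => v \in A) t & cycle e t]]].

Definition cycle_interval (T : finType) (e : rel T) (S : {set T}) : {set T} :=
  S :|: [set w | (w \notin S) && cycle_through e (w |: S) w].

Definition cycle_convex (T : finType) (e : rel T) (S : {set T}) : bool :=
  cycle_interval e S == S.

Definition Ccc (T : finType) (e : rel T) : nat :=
  \max_(S : {set T} | (S != [set: T]) && cycle_convex e S) #|S|.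

Arguments Kg n : clear implicits.
Arguments Pg n : clear implicits.
Arguments Cg n : clear implicits.

From mathcomp Require Import all_boot zify.
Set Implicit Arguments. Unset Strict Implicit. Unset Printing Implicit Defensive.

(* If two adjacent vertices u, v lie in a cycle convex set S, so does every common neighbour w,
   since w u v is a cycle through w. In a strong or lexicographic product of connected graphs
   with at least two vertices, this closure under triangles spreads from one edge to all
   vertices, so a proper cycle convex set is independent; conversely an independent set is cycle
   convex, as a cycle through an added vertex w contains an edge avoiding w. Hence C_cc is the
   independence number alpha. Always alpha (G o H) = alpha G * alpha H, and the same holds for
   G x H when G is covered by alpha G cliques, as K_m, P_m and C_2j are. For
   C_(2j+1) x C_(2k+1), the 2j+1 cliques formed by pairs of consecutive columns each carry at
   most k points of an independent set, so its size is at most (2j+1)k/2; an explicit set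
   walking through the columns in steps of 2 attains this bound. *)

Section Independence.
Variables (T : finType) (e : rel T).

Definition indep (S : {set T}) := [forall x in S, forall y in S, ~~ e x y].

Definition alpha := \max_(S : {set T} | indep S) #|S|.

Definition clique (Q : pred T) := {in Q &, forall x y, x != y -> e x y}.

Definition clique_cover q (pi : T -> 'I_q) := forall c, clique [pred x | pi x == c].

Lemma indepP (S : {set T}) :
  reflect {in S &, forall x y, ~~ e x y} (indep S).
Proof.
apply: (iffP forallP) => [H x y xS yS | H x].
  by move/implyP/(_ xS)/forallP/(_ y)/implyP/(_ yS): (H x).
by apply/implyP => xS; apply/forallP => y; apply/implyP; apply: H.
Qed.

Lemma leq_card_indep (S : {set T}) : indep S -> #|S| <= alpha.
Proof. exact: (@leq_bigmax_cond _ indep (fun S => #|S|) S). Qed.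

Lemma alpha_leq k : (forall S, indep S -> #|S| <= k) -> alpha <= k.
Proof. by move=> H; apply/bigmax_leqP. Qed.

Lemma alpha_witness : exists2 S, indep S & #|S| = alpha.
Proof.
have indep0 : indep set0 by apply/indepP => x; rewrite inE.
have [|S indS maxS] := eq_bigmax_cond (fun S : {set T} => #|S|) (A := indep).
  by apply/card_gt0P; exists set0.
by exists S; rewrite // -maxS.
Qed.

Lemma leq_card_alpha (T' : finType) (f : T' -> T) :
  injective f -> (forall x y, ~~ e (f x) (f y)) -> #|T'| <= alpha.
Proof.
move=> f_inj f_indep; rewrite -cardsT -(card_imset _ f_inj); apply: leq_card_indep.
by apply/indepP => _ _ /imsetP[x _ ->] /imsetP[y _ ->].
Qed.

Lemma alpha_leq_cover q (pi : T -> 'I_q) : clique_cover pi -> alpha <= q.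
Proof.
move=> cover; apply: alpha_leq => S /indepP indS.
have pi_inj : {in S &, injective pi}.
  move=> x y xS yS pixy; apply/eqP; apply: contraT => neq_xy.
  by move: (indS x y xS yS); rewrite (cover (pi x)) ?inE ?pixy.
by rewrite -(card_in_imset pi_inj) (leq_trans (max_card _)) ?card_ord.
Qed.

End Independence.

Lemma leq_alpha_inj (T T' : finType) (e : rel T) (e' : rel T') (f : T -> T') :
  injective f -> (forall x y, e' (f x) (f y) -> e x y) -> alpha e <= alpha e'.
Proof.
move=> f_inj f_refl; have [S /indepP indS <-] := alpha_witness e.
rewrite -(card_imset S f_inj); apply: leq_card_indep.
apply/indepP => _ _ /imsetP[x xS ->] /imsetP[y yS ->].
by apply: contra (indS x y xS yS); apply: f_refl.
Qed.

Section CycleConvexity.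
Variables (T : finType) (e : rel T).

Definition triangle_closed (S : {set T}) :=
  forall u v w, u \in S -> v \in S -> e u v -> e w u -> e w v -> w \in S.

Lemma cycle_through_edge (S : {set T}) w :
  cycle_through e (w |: S) w -> exists x y, [/\ x \in S, y \in S & e x y].
Proof.
case/existsP=> n /existsP[t /and5P[wt t_uniq n_gt2 /allP t_sub t_cycle]].
have [i s rot_t] := rot_to wt.
have in_t z : z \in w :: s -> z \in t by rewrite -rot_t mem_rot.
have in_S z : z \in w :: s -> z != w -> z \in S.
  by move=> /in_t /t_sub; rewrite !inE => /orP[->|].
move: (rot_uniq i t) (rot_cycle i e t) (size_rot i t).
rewrite rot_t t_uniq t_cycle size_tuple.
case: s {rot_t in_t} in_S => [|x [|y s]] in_S + + sz; move: n_gt2; rewrite -sz // => _.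
rewrite /= !inE !negb_or => /andP[/and3P[wx wy _] _] /and3P[_ exy _].
by exists x, y; rewrite !in_S ?inE ?eqxx ?orbT // eq_sym.
Qed.

Lemma indep_cycle_convex (S : {set T}) : indep e S -> cycle_convex e S.
Proof.
move=> /indepP indS; apply/eqP/setP => w; rewrite in_setU in_set.
case: (boolP (w \in S)) => [//|_]; rewrite orFb andTb.
apply/negbTE/negP => /cycle_through_edge[x [y [xS yS]]].
exact/negP/indS.
Qed.

Hypotheses (e_sym : symmetric e) (e_irr : irreflexive e).

Lemma cycle_convex_triangle_closed (S : {set T}) :
  cycle_convex e S -> triangle_closed S.
Proof.
move=> /eqP convS u v w uS vS euv ewu ewv; rewrite -convS in_setU in_set.
case: (boolP (w \in S)) => [//|wS]; rewrite orFb andTb.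
have neq x y : e x y -> x != y by apply: contraTneq => ->; rewrite e_irr.
have t_uniq : uniq [:: w; u; v] by rewrite /= !inE negb_or !neq.
have card3 : 3 < #|T|.+1.
  by rewrite ltnS -[3]/(size [:: w; u; v]) -(card_uniqP t_uniq) max_card.
apply/existsP; exists (Ordinal card3).
apply/existsP; exists [tuple w; u; v]; move: t_uniq.
by rewrite /= !inE eqxx uS vS ewu euv e_sym ewv !orbT => ->.
Qed.

Theorem Ccc_alpha :
  (exists u v, e u v) ->
  (forall S, triangle_closed S -> forall u v, u \in S -> v \in S -> e u v -> S = setT) ->
  Ccc e = alpha e.
Proof.
move=> [u0 [v0 e_uv0]] edge_full; apply/eqP; rewrite eqn_leq; apply/andP; split.
  apply/bigmax_leqP => S /andP[S_proper /cycle_convex_triangle_closed S_closed].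
  apply/leq_card_indep/indepP => x y xS yS; apply: contra S_proper => exy.
  by rewrite (edge_full S S_closed x y).
apply/alpha_leq => S indS.
apply: (@leq_bigmax_cond _ (fun S => (S != setT) && cycle_convex e S) (fun S => #|S|)).
rewrite indep_cycle_convex // andbT; apply: contraTneq indS => ->.
by apply/negP => /indepP/(_ u0 v0); rewrite !inE e_uv0 => /(_ isT isT).
Qed.

End CycleConvexity.

Section Connectivity.
Variables (T : finType) (e : rel T).

Definition connected := forall x y, connect e x y.

Definition nontrivial_connected :=
  [/\ symmetric e, irreflexive e, connected & 1 < #|T|].

Lemma connected_closed (P : pred T) x :
  connected -> (forall u v, e u v -> P u -> P v) -> P x -> forall y, P y.
Proof.
move=> conn P_closed + y; have /connectP[p] := conn x y.
elim: p x => [|z p IH] x /=; first by move=> _ ->.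
by case/andP=> exz pz eq_y Px; apply: IH pz eq_y (P_closed _ _ exz Px).
Qed.

Hypothesis e_conn : nontrivial_connected.

Lemma nontrivial_connected_neighbour x : exists y, e x y.
Proof.
case: e_conn => _ _ conn /card_gt1P[a [b [_ _ neq_ab]]].
have [y neq_xy] : exists y, x != y.
  by case: (eqVneq x a) => [->|]; [exists b | exists a].
have /connectP[[_ eq_yx|z p /andP[exz _] _]] := conn x y; last by exists z.
by rewrite eq_yx eqxx in neq_xy.
Qed.

Lemma nontrivial_connected_edge : exists x y, e x y.
Proof.
case: e_conn => _ _ _ /ltnW/card_gt0P[x _].
by have [y exy] := nontrivial_connected_neighbour x; exists x, y.
Qed.

End Connectivity.

Lemma card_fibres (T C : finType) (f : T -> C) (S : {set T}) :
  #|S| = \sum_(c : C) #|[set x in S | f x == c]|.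
Proof.
rewrite -sum1_card (partition_big f xpredT) //=.
by apply: eq_bigr => c _; rewrite -sum1_card; apply: eq_bigl => x; rewrite inE.
Qed.

Lemma card_fibres_leq (T C : finType) (f : T -> C) (S : {set T}) k :
  (forall c, #|[set x in S | f x == c]| <= k) -> #|S| <= #|f @: S| * k.
Proof.
move=> fibre_le; rewrite -sum1_card (partition_big_imset f) -sum_nat_const.
apply: leq_sum => c _; apply: leq_trans (fibre_le c).
by rewrite -sum1_card; apply/eq_leq/eq_bigl => x; rewrite inE.
Qed.

Section ProductIndependence.
Variables (T1 T2 : finType) (e1 : rel T1) (e2 : rel T2).

Lemma strongP_lexP x y : strongP e1 e2 x y -> lexP e1 e2 x y.
Proof. by rewrite /strongP /lexP => /or3P[/andP[-> _]|->|/andP[-> _]]; rewrite ?orbT. Qed.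

Lemma indep_lexP_strongP S : indep (lexP e1 e2) S -> indep (strongP e1 e2) S.
Proof.
move=> /indepP indS; apply/indepP => x y xS yS.
by apply: contra (indS x y xS yS); apply: strongP_lexP.
Qed.

Lemma leq_alpha_lexP_strongP : alpha (lexP e1 e2) <= alpha (strongP e1 e2).
Proof. exact: (leq_alpha_inj (f := id)) strongP_lexP. Qed.

Lemma card_strongP_fibre (S : {set T1 * T2}) (Q : pred T1) :
  indep (strongP e1 e2) S -> clique e1 Q -> #|[set x in S | Q x.1]| <= alpha e2.
Proof.
move=> /indepP indS Q_clique.
have snd_apart x y : x \in S -> y \in S -> Q x.1 -> Q y.1 -> x != y ->
    (x.2 == y.2) || e2 x.2 y.2 -> False.
  case: x y => [a b] [a' b'] /= xS yS Qa Qa' neq /orP[/eqP eq_b|eb].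
    have neq_a : a != a' by apply: contraNneq neq => ->; rewrite eq_b.
    by move: (indS _ _ xS yS); rewrite /strongP /= Q_clique ?eq_b ?eqxx.
  move: (indS _ _ xS yS); rewrite /strongP /= eb andbT.
  case: (eqVneq a a') => [->|neq_a]; first by rewrite orTb orbT.
  by rewrite (Q_clique a a') ?orbT.
have snd_inj : {in [set x in S | Q x.1] &, injective snd}.
  move=> x y; rewrite !inE => /andP[xS Qx] /andP[yS Qy] eq_xy2.
  apply/eqP; apply: contraT => neq.
  by case: (snd_apart x y xS yS Qx Qy neq); rewrite eq_xy2 eqxx.
rewrite -(card_in_imset snd_inj); apply/leq_card_indep/indepP.
move=> _ _ /imsetP[x + ->] /imsetP[y + ->]; rewrite !inE => /andP[xS Qx] /andP[yS Qy].
apply/negP => exy; apply: (snd_apart x y) => //; last by rewrite exy orbT.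
apply: contraTneq exy => eq_xy; apply: contra (indS _ _ xS xS).
by rewrite /strongP eq_xy => ->; rewrite !eqxx orbT.
Qed.

Lemma alpha_strongP_leq_cover q (pi : T1 -> 'I_q) :
  clique_cover e1 pi -> alpha (strongP e1 e2) <= q * alpha e2.
Proof.
move=> cover; apply: alpha_leq => S indS.
have fibre_le c : #|[set x in S | pi x.1 == c]| <= alpha e2.
  exact: card_strongP_fibre indS (cover c).
rewrite (card_fibres (pi \o fst)) -[X in _ <= X * _]card_ord -sum_nat_const.
exact: leq_sum.
Qed.

Lemma alpha_lexP : alpha (lexP e1 e2) = alpha e1 * alpha e2.
Proof.
apply/eqP; rewrite eqn_leq; apply/andP; split.
  apply: alpha_leq => S indS; have /indepP lex_indS := indS.
  have fst_indep : indep e1 (fst @: S).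
    apply/indepP => _ _ /imsetP[x xS ->] /imsetP[y yS ->].
    by apply: contra (lex_indS x y xS yS) => exy; rewrite /lexP exy.
  apply: leq_trans (card_fibres_leq (k := alpha e2) _) _.
    move=> a; have := card_strongP_fibre (indep_lexP_strongP indS) (Q := pred1 a).
    by apply; move=> a1 a2 /eqP-> /eqP->; rewrite eqxx.
  by rewrite leq_mul2r leq_card_indep ?orbT.
have [I /indepP indI <-] := alpha_witness e1.
have [J /indepP indJ <-] := alpha_witness e2.
rewrite -cardsX; apply/leq_card_indep/indepP => -[a b] [a' b'].
rewrite !inE /= => /andP[aI bJ] /andP[aI' bJ'].
by rewrite /lexP /= negb_or indI //= negb_and indJ ?orbT.
Qed.

End ProductIndependence.

Lemma alpha_strongPC (T1 T2 : finType) (e1 : rel T1) (e2 : rel T2) :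
  alpha (strongP e1 e2) = alpha (strongP e2 e1).
Proof.
have swap_le (A B : finType) (a : rel A) (b : rel B) :
    alpha (strongP a b) <= alpha (strongP b a).
  apply: (leq_alpha_inj (f := fun x => (x.2, x.1))) => [[x1 x2] [y1 y2] [-> ->]|] //.
  by move=> [x1 x2] [y1 y2]; rewrite /strongP /= => /or3P[]/andP[-> ->]; rewrite ?orbT.
by apply/eqP; rewrite eqn_leq !swap_le.
Qed.

Section ProductCycleConvexity.
Variables (T1 T2 : finType) (e1 : rel T1) (e2 : rel T2).
Hypotheses (e1_conn : nontrivial_connected e1) (e2_conn : nontrivial_connected e2).

Let e1_sym : symmetric e1. Proof. by case: e1_conn. Qed.
Let e2_sym : symmetric e2. Proof. by case: e2_conn. Qed.
Let e1_irr : irreflexive e1. Proof. by case: e1_conn. Qed.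
Let e2_irr : irreflexive e2. Proof. by case: e2_conn. Qed.

Lemma strongP_sym : symmetric (strongP e1 e2).
Proof. by move=> x y; rewrite /strongP e1_sym e2_sym (eq_sym x.1) (eq_sym x.2). Qed.

Lemma strongP_irr : irreflexive (strongP e1 e2).
Proof. by move=> x; rewrite /strongP e1_irr e2_irr andbF. Qed.

Lemma lexP_sym : symmetric (lexP e1 e2).
Proof. by move=> x y; rewrite /lexP e1_sym e2_sym (eq_sym x.1). Qed.

Lemma lexP_irr : irreflexive (lexP e1 e2).
Proof. by move=> x; rewrite /lexP e1_irr e2_irr andbF. Qed.

Section StrongTriangleClosed.
Variable S : {set T1 * T2}.
Hypothesis S_closed : triangle_closed (strongP e1 e2) S.

Lemma strongP_spread_vertical a b b' x :
  (a, b) \in S -> (a, b') \in S -> e2 b b' -> ((x, b) \in S) && ((x, b') \in S).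
Proof.
move=> ab ab' ebb'; have eb'b : e2 b' b by rewrite e2_sym.
have [_ _ conn1 _] := e1_conn.
pose P y := ((y, b) \in S) && ((y, b') \in S).
apply: (connected_closed (P := P) (x := a) conn1).
  move=> y z eyz /andP[yb yb']; have ezy : e1 z y by rewrite e1_sym.
  by apply/andP; split; apply: (@S_closed (y, b) (y, b')) => //;
    rewrite /strongP /= ?eqxx ?ezy ?ebb' ?eb'b ?orbT.
by rewrite /P ab ab'.
Qed.

Lemma strongP_spread_horizontal a a' b y :
  (a, b) \in S -> (a', b) \in S -> e1 a a' -> ((a, y) \in S) && ((a', y) \in S).
Proof.
move=> ab a'b eaa'; have ea'a : e1 a' a by rewrite e1_sym.
have [_ _ conn2 _] := e2_conn.
pose P z := ((a, z) \in S) && ((a', z) \in S).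
apply: (connected_closed (P := P) (x := b) conn2).
  move=> y' z ey'z /andP[ay' a'y']; have ezy' : e2 z y' by rewrite e2_sym.
  by apply/andP; split; apply: (@S_closed (a, y') (a', y')) => //;
    rewrite /strongP /= ?eqxx ?ezy' ?eaa' ?ea'a ?orbT.
by rewrite /P ab a'b.
Qed.

Lemma strongP_vertical_edge_full a b b' :
  (a, b) \in S -> (a, b') \in S -> e2 b b' -> S = setT.
Proof.
move=> ab ab' ebb'; apply/setP => -[x y]; rewrite inE.
have [x' exx'] := nontrivial_connected_neighbour e1_conn x.
have /andP[xb _] := strongP_spread_vertical x ab ab' ebb'.
have /andP[x'b _] := strongP_spread_vertical x' ab ab' ebb'.
by case/andP: (strongP_spread_horizontal y xb x'b exx').
Qed.

Lemma strongP_triangle_closed_full u v :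
  u \in S -> v \in S -> strongP e1 e2 u v -> S = setT.
Proof.
case: u v => [a b] [a' b'] ab a'b'; rewrite /strongP /=.
case/or3P=> [/andP[eaa' /eqP eq_b]|/andP[/eqP eq_a ebb']|/andP[eaa' ebb']].
- subst b'; have [y eby] := nontrivial_connected_neighbour e2_conn b.
  have /andP[ab2 _] := strongP_spread_horizontal b ab a'b' eaa'.
  have /andP[ay _] := strongP_spread_horizontal y ab a'b' eaa'.
  exact: strongP_vertical_edge_full ab2 ay eby.
- by subst a'; apply: strongP_vertical_edge_full ab a'b' ebb'.
- have ab' : (a, b') \in S.
    have eb'b : e2 b' b by rewrite e2_sym.
    by apply: (@S_closed (a, b) (a', b')) => //;
      rewrite /strongP /= ?eqxx ?eaa' ?ebb' ?eb'b ?orbT.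
  exact: strongP_vertical_edge_full ab ab' ebb'.
Qed.

End StrongTriangleClosed.

Lemma lexP_triangle_closed_full (S : {set T1 * T2}) :
  triangle_closed (lexP e1 e2) S ->
  forall u v, u \in S -> v \in S -> lexP e1 e2 u v -> S = setT.
Proof.
move=> S_closed.
have [_ _ conn1 _] := e1_conn; have [_ _ conn2 _] := e2_conn.
have [b0 [b1 eb01]] := nontrivial_connected_edge e2_conn.
pose full_fibre a := [forall y, (a, y) \in S].
have spread a a' : e1 a a' -> full_fibre a -> full_fibre a'.
  move=> eaa' /forallP Sa; apply/forallP => y; have ea'a : e1 a' a by rewrite e1_sym.
  by apply: (S_closed (a, b0) (a, b1)); rewrite /lexP /= ?eqxx ?eb01 ?ea'a ?orbT.
have fibre_full a : full_fibre a -> S = setT.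
  move=> Sa; apply/setP => -[x y]; rewrite inE.
  by have /forallP := connected_closed conn1 spread Sa x; apply.
have fill a b a' b' : (a, b) \in S -> (a', b') \in S -> e1 a a' -> full_fibre a.
  move=> ab a'b' eaa'; apply/forallP.
  apply: (connected_closed (P := fun y => (a, y) \in S) (x := b) conn2) => // y z eyz ay.
  have ezy : e2 z y by rewrite e2_sym.
  by apply: (S_closed (a, y) (a', b')); rewrite /lexP /= ?eqxx ?eaa' ?ezy ?orbT.
move=> [a b] [a' b'] ab a'b'; rewrite /lexP /= => /orP[eaa'|/andP[/eqP eq_a ebb']].
  exact: fibre_full (fill _ _ _ _ ab a'b' eaa').
subst a'; have [c eac] := nontrivial_connected_neighbour e1_conn a.
apply: (fibre_full c); apply/forallP => y; have eca : e1 c a by rewrite e1_sym.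
by apply: (S_closed (a, b) (a, b')); rewrite /lexP /= ?eqxx ?ebb' ?eca ?orbT.
Qed.

Lemma Ccc_strongP : Ccc (strongP e1 e2) = alpha (strongP e1 e2).
Proof.
apply: Ccc_alpha strongP_sym strongP_irr _ (@strongP_triangle_closed_full).
have [a [a' eaa']] := nontrivial_connected_edge e1_conn.
have [b _] := nontrivial_connected_edge e2_conn.
by exists (a, b), (a', b); rewrite /strongP /= eaa' eqxx.
Qed.

Lemma Ccc_lexP : Ccc (lexP e1 e2) = alpha e1 * alpha e2.
Proof.
rewrite -alpha_lexP; apply: Ccc_alpha lexP_sym lexP_irr _ (@lexP_triangle_closed_full).
have [a [a' eaa']] := nontrivial_connected_edge e1_conn.
have [b _] := nontrivial_connected_edge e2_conn.
by exists (a, b), (a', b); rewrite /lexP /= eaa'.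
Qed.

Lemma Ccc_strongP_cover q (pi : T1 -> 'I_q) :
  clique_cover e1 pi -> q <= alpha e1 -> Ccc (strongP e1 e2) = alpha e1 * alpha e2.
Proof.
move=> cover q_le; rewrite Ccc_strongP; apply/eqP; rewrite eqn_leq.
rewrite -{2}alpha_lexP leq_alpha_lexP_strongP andbT.
by apply: leq_trans (alpha_strongP_leq_cover _ cover) _; rewrite leq_mul2r q_le orbT.
Qed.

Lemma Ccc_products_cover q (pi : T1 -> 'I_q) :
  clique_cover e1 pi -> q <= alpha e1 ->
  Ccc (strongP e1 e2) = alpha e1 * alpha e2 /\ Ccc (lexP e1 e2) = alpha e1 * alpha e2.
Proof. by move=> cover q_le; rewrite (Ccc_strongP_cover cover q_le) Ccc_lexP. Qed.

End ProductCycleConvexity.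

Lemma Ccc_strongP_cover_r (T1 T2 : finType) (e1 : rel T1) (e2 : rel T2)
    q (pi : T2 -> 'I_q) :
  nontrivial_connected e1 -> nontrivial_connected e2 ->
  clique_cover e2 pi -> q <= alpha e2 -> Ccc (strongP e1 e2) = alpha e1 * alpha e2.
Proof.
move=> e1_conn e2_conn cover q_le.
rewrite Ccc_strongP // alpha_strongPC -Ccc_strongP //.
by rewrite (Ccc_strongP_cover _ _ cover) // mulnC.
Qed.

Lemma connected_succ n (e : rel 'I_n) :
  symmetric e -> (forall x y : 'I_n, x.+1 = y :> nat -> e x y) -> connected e.
Proof.
move=> e_sym e_succ x y.
have n_gt0 : 0 < n by apply: leq_ltn_trans (ltn_ord x).
have from0 z : connect e (Ordinal n_gt0) z.
  case: z => i; elim: i => [|i IH] i_lt.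
    by rewrite (_ : Ordinal i_lt = Ordinal n_gt0) ?connect0 //; apply: val_inj.
  by apply: connect_trans (IH (ltnW i_lt)) (connect1 _); apply: e_succ.
by apply: connect_trans (from0 y); rewrite (sym_connect_sym e_sym) from0.
Qed.

Lemma Kg_nontrivial_connected n : 1 < n -> nontrivial_connected (Kg n).
Proof.
move=> n_gt1; split; rewrite ?card_ord //.
- by move=> x y; rewrite /Kg eq_sym.
- by move=> x; rewrite /Kg eqxx.
- by move=> x y; case: (eqVneq x y) => [->|neq]; [apply: connect0 | apply: connect1].
Qed.

Lemma Pg_sym n : symmetric (Pg n).
Proof. by move=> x y; rewrite /Pg orbC. Qed.

Lemma Pg_nontrivial_connected n : 1 < n -> nontrivial_connected (Pg n).
Proof.
move=> n_gt1; split; rewrite ?card_ord //; first exact: Pg_sym.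
  by move=> x; apply/negP => /orP[] /eqP; lia.
by apply: connected_succ (@Pg_sym n) _ => x y succ_xy; rewrite /Pg succ_xy eqxx.
Qed.

Lemma Cg_sym n : symmetric (Cg n).
Proof. by move=> x y; rewrite /Cg orbC eq_sym. Qed.

Lemma Cg_succ n (x y : 'I_n) : x.+1 = y -> Cg n x y.
Proof.
move=> succ_xy; rewrite /Cg modn_small succ_xy ?eqxx ?andbT ?ltn_ord //.
by apply/eqP => /(congr1 val) /=; lia.
Qed.

Lemma Cg_ordS n (x : 'I_n) : 2 < n -> Cg n x (ordS x).
Proof.
move=> n_gt2; rewrite /Cg /= eqxx andbT.
have x_lt := ltn_ord x; apply/eqP => /(congr1 val) /=.
case: (ltnP x.+1 n) => [/modn_small->|lt_n]; first lia.
by rewrite (_ : x.+1 = n) ?modnn; lia.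
Qed.

Lemma Cg_nontrivial_connected n : 2 < n -> nontrivial_connected (Cg n).
Proof.
move=> n_gt2; split; rewrite ?card_ord 1?ltnW //; first exact: Cg_sym.
  by move=> x; rewrite /Cg eqxx.
exact: connected_succ (@Cg_sym n) (@Cg_succ n).
Qed.


Lemma Kg_clique_cover n : clique_cover (Kg n) (fun _ => ord0 : 'I_1).
Proof. by move=> c x y _ _. Qed.

Lemma half_ord_subproof n (x : 'I_n) : x %/ 2 < (n + 1) %/ 2.
Proof. by have := ltn_ord x; lia. Qed.

Definition half_ord n (x : 'I_n) : 'I_((n + 1) %/ 2) := Ordinal (half_ord_subproof x).

Lemma Pg_half_cover n : clique_cover (Pg n) (@half_ord n).
Proof.
move=> c x y; rewrite !inE => /eqP<- /eqP/(congr1 val) /= eq_half neq_xy.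
have {}neq_xy : x != y :> nat by [].
by rewrite /Pg; apply/orP; lia.
Qed.

Lemma Cg_half_cover n : clique_cover (Cg n) (@half_ord n).
Proof.
move=> c x y; rewrite !inE => /eqP<- /eqP/(congr1 val) /= eq_half neq_xy.
have {}neq_xy : x != y :> nat by [].
case: (ltngtP x y) => [xy|yx|]; last lia.
  by apply: Cg_succ; lia.
by rewrite Cg_sym; apply: Cg_succ; lia.
Qed.

Lemma alpha_Kg n : 0 < n -> alpha (Kg n) = 1.
Proof.
move=> n_gt0; apply/eqP; rewrite eqn_leq (alpha_leq_cover (@Kg_clique_cover n)).
rewrite -[1](card_ord 1); apply: (leq_card_alpha (f := fun _ => Ordinal n_gt0)).
  by move=> a b _; rewrite !ord1.
by move=> a b; rewrite /Kg eqxx.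
Qed.

Lemma alpha_Pg n : alpha (Pg n) = (n + 1) %/ 2.
Proof.
apply/eqP; rewrite eqn_leq (alpha_leq_cover (@Pg_half_cover n)).
have dbl_lt (c : 'I_((n + 1) %/ 2)) : 2 * c < n by have := ltn_ord c; lia.
rewrite -[X in X <= _]card_ord.
apply: (leq_card_alpha (f := fun c => Ordinal (dbl_lt c))).
  by move=> c c' /(congr1 val) /= eq_dbl; apply: val_inj => /=; lia.
by move=> c c'; rewrite /Pg /=; apply/negP => /orP[] /eqP; lia.
Qed.

Lemma leq_double_sum_ordS n (f : 'I_n -> nat) k :
  (forall i, f i + f (ordS i) <= k) -> 2 * \sum_i f i <= n * k.
Proof.
move=> f_le; rewrite mul2n -addnn {2}(reindex_inj (can_inj (@ordSK n))) -big_split /=.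
by rewrite -[X in _ <= X * _]card_ord -sum_nat_const; apply: leq_sum => i _.
Qed.

Lemma alpha_Cg n : 2 < n -> alpha (Cg n) = n %/ 2.
Proof.
move=> n_gt2; apply/eqP; rewrite eqn_leq; apply/andP; split.
  apply: alpha_leq => S /indepP indS.
  suff : 2 * \sum_i ((i \in S) : nat) <= n * 1 by rewrite -big_mkcond sum1_card; lia.
  apply: leq_double_sum_ordS => i.
  case: (boolP (i \in S)) => iS; case: (boolP (ordS i \in S)) => iS' //.
  by move: (indS _ _ iS iS'); rewrite Cg_ordS.
have dbl_lt (c : 'I_(n %/ 2)) : 2 * c < n by have := ltn_ord c; lia.
rewrite -[X in X <= _]card_ord.
apply: (leq_card_alpha (f := fun c => Ordinal (dbl_lt c))).
  by move=> c c' /(congr1 val) /= eq_dbl; apply: val_inj => /=; lia.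
move=> c c'; have c_lt := ltn_ord c; have c'_lt := ltn_ord c'.
by rewrite /Cg /= !modn_small; lia.
Qed.


Lemma eq_or_strongP (T1 T2 : finType) (e1 : rel T1) (e2 : rel T2) x y :
  (x == y) || strongP e1 e2 x y ->
  ((x.1 == y.1) || e1 x.1 y.1) && ((x.2 == y.2) || e2 x.2 y.2).
Proof.
case: x y => [a b] [a' b']; rewrite /strongP xpair_eqE /=.
by case/orP=> [/andP[-> ->]|/or3P[]/andP[-> ->]]; rewrite ?orbT.
Qed.

Definition near_mod d a b :=
  [|| a == b %[mod d], a.+1 == b %[mod d] | a == b.+1 %[mod d]].

Lemma near_mod_congr d a1 a2 b1 b2 :
  a1 = a2 %[mod d] -> b1 = b2 %[mod d] -> near_mod d a1 b1 = near_mod d a2 b2.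
Proof.
have succ_congr c1 c2 : c1 = c2 %[mod d] -> c1.+1 = c2.+1 %[mod d].
  by move=> eq_c; rewrite -[c1.+1]addn1 -[c2.+1]addn1 -modnDml eq_c modnDml.
move=> eq_a eq_b; rewrite /near_mod eq_a eq_b.
by rewrite (succ_congr _ _ eq_a) (succ_congr _ _ eq_b).
Qed.

Lemma near_modC d a b : near_mod d a b = near_mod d b a.
Proof. by rewrite /near_mod; apply/idP/idP => /or3P[] /eqP ->; rewrite eqxx ?orbT. Qed.

Lemma near_modDl d p a b : near_mod d (p + a) (p + b) = near_mod d a b.
Proof. by rewrite /near_mod -!addnS !eqn_modDl. Qed.

Lemma eq_or_Cg_near_mod d (x y : 'I_d) : (x == y) || Cg d x y -> near_mod d x y.
Proof.
rewrite /near_mod /Cg !(modn_small (ltn_ord x)) !(modn_small (ltn_ord y)).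
case/orP=> [/eqP->|/andP[_ /orP[] /eqP succ_xy]]; first by rewrite eqxx.
  by rewrite succ_xy eqxx orbT.
by rewrite -succ_xy eqxx !orbT.
Qed.

Lemma near_mod_far d a b :
  b < d -> a.+2 <= b -> near_mod d a b = (a == 0) && (b.+1 == d).
Proof.
move=> b_lt ab; rewrite /near_mod !(@modn_small a) ?(@modn_small a.+1) ?(@modn_small b);
  try lia.
have [succ_lt|d_le] := ltnP b.+1 d.
  by rewrite modn_small //; apply/or3P/andP; case; lia.
by rewrite (_ : b.+1 = d) ?modnn; lia.
Qed.

Section OddCycleStrongProduct.
Variables j k : nat.
Hypotheses (k_gt0 : 0 < k) (k_le_j : k <= j).

Let j_gt0 : 0 < j. Proof. by apply: leq_trans k_le_j. Qed.

(* The t-th point sits in column 2t mod (2j+1) and in row [stripe_row t]: the q-th block of j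
   consecutive points fills rows 2q and 2q+1, its last k/2 points going to the odd row. Points
   less than j apart have far-apart columns, points at least j apart have far-apart rows, except
   for the last row against row 0, whose columns are shifted by k. *)
Definition stripe_row t := t %/ j + (t + k %/ 2) %/ j.

Definition stripe_col t := (2 * t) %% (2 * j + 1).

Lemma stripe_shift_leq t : t < j * k + k %/ 2 -> (t + k %/ 2) %/ j <= k.
Proof. by move=> t_lt; rewrite -ltnS ltn_divLR // mulSn; lia. Qed.

Lemma stripe_row_lt t : t < j * k + k %/ 2 -> stripe_row t < 2 * k + 1.
Proof.
move=> t_lt; have := stripe_shift_leq t_lt.
have := leq_div2r j (leq_addr (k %/ 2) t); rewrite /stripe_row; lia.
Qed.

Lemma stripe_row_far t t' : t + j <= t' -> (stripe_row t).+2 <= stripe_row t'.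
Proof.
move=> le_t; have := leq_div2r j le_t.
have := leq_div2r j (leq_add le_t (leqnn (k %/ 2))).
by rewrite addnAC !(divnDr _ (dvdnn j)) divnn j_gt0 /stripe_row; lia.
Qed.

Lemma stripe_row_eq0 t : stripe_row t = 0 -> t + k %/ 2 < j.
Proof.
move/eqP; rewrite addn_eq0 => /andP[_ /eqP shift0].
by rewrite -[j]mul1n -ltn_divLR // shift0.
Qed.

Lemma stripe_row_top t : t < j * k + k %/ 2 -> stripe_row t = 2 * k -> j * k <= t.
Proof.
move=> t_lt row_top; have shift_le := stripe_shift_leq t_lt.
have : k <= t %/ j by rewrite /stripe_row in row_top; lia.
by rewrite leq_divRL // mulnC.
Qed.

Lemma stripe_separated t t' :
  t < t' -> t' < j * k + k %/ 2 ->
  near_mod (2 * j + 1) (stripe_col t) (stripe_col t') ->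
  ~~ near_mod (2 * k + 1) (stripe_row t) (stripe_row t').
Proof.
move=> lt_tt' t'_lt; rewrite /stripe_col (near_mod_congr (modn_mod _ _) (modn_mod _ _)).
have [far|close] := leqP (t + j) t'; last first.
  have := near_modDl (2 * j + 1) (2 * t) 0 (2 * (t' - t)).
  rewrite addn0 -mulnDr subnKC 1?ltnW // => ->.
  by rewrite near_mod_far; lia.
rewrite [near_mod (2 * k + 1) _ _]near_mod_far ?stripe_row_lt ?stripe_row_far //.
move=> near_col.
apply/negP => /andP[/eqP/stripe_row_eq0 t_small /eqP row_top].
have t'_big : j * k <= t' by apply: stripe_row_top; lia.
move: near_col; rewrite -(near_modDl _ k).
rewrite (_ : k + 2 * t' = k * (2 * j + 1) + 2 * (t' - j * k)); last by lia.
rewrite (@near_mod_congr _ _ (k + 2 * t) _ _ (erefl _) (modnMDl _ _ _)) near_modC.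
by rewrite near_mod_far; lia.
Qed.

Lemma stripe_col_lt t : stripe_col t < 2 * j + 1.
Proof. by rewrite ltn_pmod ?addn1. Qed.

Definition stripe_point (t : 'I_(j * k + k %/ 2)) : 'I_(2 * j + 1) * 'I_(2 * k + 1) :=
  (Ordinal (stripe_col_lt t), Ordinal (stripe_row_lt (ltn_ord t))).

Lemma stripe_point_separated t t' : t != t' ->
  ~~ ((stripe_point t == stripe_point t') ||
      strongP (Cg (2 * j + 1)) (Cg (2 * k + 1)) (stripe_point t) (stripe_point t')).
Proof.
move=> neq; apply/negP => /eq_or_strongP/andP[/eq_or_Cg_near_mod near_col].
move/eq_or_Cg_near_mod => /= near_row; move: near_col near_row => /=.
wlog lt_tt' : t t' {neq} / t < t'.
  move=> sep; case: (ltngtP t t') => [|lt_t't|/val_inj eq_tt']; first exact: sep.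
    by move=> near_col near_row; apply: (sep t' t); rewrite // near_modC.
  by rewrite eq_tt' eqxx in neq.
by move/(stripe_separated lt_tt' (ltn_ord t'))/negP.
Qed.

Lemma alpha_strongP_odd_cycles :
  alpha (strongP (Cg (2 * j + 1)) (Cg (2 * k + 1))) = j * k + k %/ 2.
Proof.
apply/eqP; rewrite eqn_leq; apply/andP; split; last first.
  rewrite -[X in X <= _]card_ord; apply: (leq_card_alpha (f := stripe_point)).
    move=> t t' eq_pt; apply/eqP; apply: contraT => /stripe_point_separated.
    by rewrite eq_pt eqxx.
  move=> t t'; case: (eqVneq t t') => [->|/stripe_point_separated].
    by rewrite /strongP !eqxx /Cg !eqxx !andbF.
  by rewrite negb_or => /andP[].
apply: alpha_leq => S indS.
suff : 2 * #|S| <= (2 * j + 1) * k by lia.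
rewrite (card_fibres fst); apply: leq_double_sum_ordS => a.
(* The columns a and a+1 form a clique, so together they carry at most alpha C_(2k+1) points. *)
have a_adj : Cg (2 * j + 1) a (ordS a) by apply: Cg_ordS; lia.
pose Q := [pred b | (b == a) || (b == ordS a)].
have Q_clique : clique (Cg (2 * j + 1)) Q.
  move=> b b'; rewrite !inE => /orP[]/eqP-> /orP[]/eqP->; rewrite ?eqxx // => _.
  by rewrite Cg_sym.
rewrite -cardsUI (_ : _ :&: _ = set0) ?cards0 ?addn0; last first.
  apply/setP => x; rewrite !inE; apply/negP => /andP[/andP[_ /eqP->] /andP[_ /eqP]].
  by apply/eqP; case/andP: a_adj.
apply: leq_trans (subset_leq_card (_ : _ \subset [set x in S | Q x.1])) _.
  by apply/subsetP => x; rewrite !inE; case/orP=> /andP[-> ->]; rewrite ?orbT.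
by rewrite (leq_trans (card_strongP_fibre indS Q_clique)) // alpha_Cg; lia.
Qed.

End OddCycleStrongProduct.

Lemma Ccc_Kg_products m (T : finType) (e : rel T) : 1 < m -> nontrivial_connected e ->
  Ccc (strongP (Kg m) e) = alpha e /\ Ccc (lexP (Kg m) e) = alpha e.
Proof.
move=> m_gt1 e_conn; have alpha_K : alpha (Kg m) = 1 by apply: alpha_Kg; apply: ltnW.
have cover_le : 1 <= alpha (Kg m) by rewrite alpha_K.
have := Ccc_products_cover (Kg_nontrivial_connected m_gt1) e_conn (@Kg_clique_cover m)
  cover_le.
by rewrite alpha_K mul1n.
Qed.

Lemma Ccc_Pg_products m (T : finType) (e : rel T) : 1 < m -> nontrivial_connected e ->
  Ccc (strongP (Pg m) e) = (m + 1) %/ 2 * alpha e /\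
  Ccc (lexP (Pg m) e) = (m + 1) %/ 2 * alpha e.
Proof.
move=> m_gt1 e_conn; have cover_le := eq_leq (esym (alpha_Pg m)).
have := Ccc_products_cover (Pg_nontrivial_connected m_gt1) e_conn (@Pg_half_cover m)
  cover_le.
by rewrite alpha_Pg.
Qed.

Lemma Ccc_Cg_even_strongP j (T : finType) (e : rel T) : 1 < j -> nontrivial_connected e ->
  Ccc (strongP (Cg (2 * j)) e) = j * alpha e.
Proof.
move=> j_gt1 e_conn; have j2_gt2 : 2 < 2 * j by lia.
have cover_le : (2 * j + 1) %/ 2 <= alpha (Cg (2 * j)) by rewrite alpha_Cg //; lia.
have := Ccc_strongP_cover (Cg_nontrivial_connected j2_gt2) e_conn (@Cg_half_cover (2 * j))
  cover_le.
by rewrite alpha_Cg // mulKn.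
Qed.

Lemma Ccc_strongP_Pg_r n (T : finType) (e : rel T) : 1 < n -> nontrivial_connected e ->
  Ccc (strongP e (Pg n)) = alpha e * ((n + 1) %/ 2).
Proof.
move=> n_gt1 e_conn; have cover_le := eq_leq (esym (alpha_Pg n)).
have := Ccc_strongP_cover_r e_conn (Pg_nontrivial_connected n_gt1) (@Pg_half_cover n) cover_le.
by rewrite alpha_Pg.
Qed.

Theorem mainTheorem15 :
  (* 1 *)
  (forall m n : nat, 2 <= m -> 2 <= n ->
     Ccc (strongP (Kg m) (Kg n)) = 1 /\ Ccc (lexP (Kg m) (Kg n)) = 1) /\
  (* 2 *)
  (forall m n : nat, 2 <= m -> 3 <= n ->
     Ccc (strongP (Kg m) (Cg n)) = n %/ 2 /\ Ccc (lexP (Kg m) (Cg n)) = n %/ 2) /\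
  (* 3 *)
  (forall m n : nat, 2 <= m -> 2 <= n ->
     Ccc (strongP (Kg m) (Pg n)) = (n + 1) %/ 2 /\
     Ccc (lexP (Kg m) (Pg n)) = (n + 1) %/ 2) /\
  (* 4 *)
  (forall m n : nat, 3 <= m -> 3 <= n ->
     Ccc (lexP (Cg m) (Cg n)) = (m %/ 2) * (n %/ 2)) /\
  (* 5 *)
  (forall j n : nat, 3 <= 2 * j -> 3 <= n ->
     Ccc (strongP (Cg (2 * j)) (Cg n)) = j * (n %/ 2)) /\
  (* 6 *)
  (forall j k : nat, 1 <= k -> k <= j ->
     Ccc (strongP (Cg (2 * j + 1)) (Cg (2 * k + 1))) = j * k + k %/ 2) /\
  (* 7 *)
  (forall m n : nat, 3 <= m -> 2 <= n ->
     Ccc (strongP (Cg m) (Pg n)) = (m %/ 2) * ((n + 1) %/ 2) /\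
     Ccc (lexP (Cg m) (Pg n)) = (m %/ 2) * ((n + 1) %/ 2)) /\
  (* 8 *)
  (forall m n : nat, 2 <= m -> 2 <= n ->
     Ccc (strongP (Pg m) (Pg n)) = ((m + 1) %/ 2) * ((n + 1) %/ 2) /\
     Ccc (lexP (Pg m) (Pg n)) = ((m + 1) %/ 2) * ((n + 1) %/ 2)).
Proof.
have Kc := Kg_nontrivial_connected; have Pc := Pg_nontrivial_connected.
have Cc := Cg_nontrivial_connected.
split=> [m n hm hn|].
  by have [-> ->] := Ccc_Kg_products hm (Kc _ hn); rewrite alpha_Kg // ltnW.
split=> [m n hm hn|].
  by have [-> ->] := Ccc_Kg_products hm (Cc _ hn); rewrite alpha_Cg.
split=> [m n hm hn|].
  by have [-> ->] := Ccc_Kg_products hm (Pc _ hn); rewrite alpha_Pg.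
split=> [m n hm hn|]; first by rewrite (Ccc_lexP (Cc _ hm) (Cc _ hn)) !alpha_Cg.
split=> [j n hj hn|].
  have j_gt1 : 1 < j by lia.
  by rewrite (Ccc_Cg_even_strongP j_gt1 (Cc _ hn)) alpha_Cg.
split=> [j k hk hkj|].
  have [hm hn] : 2 < 2 * j + 1 /\ 2 < 2 * k + 1 by lia.
  by rewrite (Ccc_strongP (Cc _ hm) (Cc _ hn)) alpha_strongP_odd_cycles.
split=> [m n hm hn|].
  by rewrite (Ccc_lexP (Cc _ hm) (Pc _ hn)) (Ccc_strongP_Pg_r hn (Cc _ hm)) alpha_Cg ?alpha_Pg.
by move=> m n hm hn; have [-> ->] := Ccc_Pg_products hm (Pc _ hn); rewrite alpha_Pg.
Qed.
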